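(* Let $H$ be a non-abelian finite $p$-group with cyclic centre (so $H$ is monolithic), and let $C$ be a finite $p$-group of order $n$. Let $W=H\wr C$ be the regular wreath product with base group $B=H^n$, let $Z=Z(H)^n$ and $F=\{(x_1,\dots,x_n)\in Z: x_1x_2\cdots x_n=1\}$ (a normal subgroup of $W$). Then the wreath-central product $J=W/F$ satisfies $Z(J)\cong Z(H)$; hence $J$ is monolithic.
   Context: A group is monolithic if the intersection of all its nontrivial normal subgroups is nontrivial. *)

From HB Require Import structures.
From mathcomp Require Import all_boot all_fingroup all_solvable.
Set Implicit Arguments. Unset Strict Implicit. Unset Printing Implicit Defensive.

Import GroupScope.

(* Regular wreath product  H wr C  =  H^C  ><|  C, where C acts on the base
   group H^C (functions C -> H, i.e. n = |C| copies of H indexed by C) by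
   left translation of coordinates:  (a . g) x = g (a^-1 x). *)
Section Wreath.
Variables (hT cT : finGroupType).

Definition wreath_type : Type := ({ffun cT -> hT} * cT)%type.
HB.instance Definition _ := Finite.on wreath_type.

Definition wr_mul (u v : wreath_type) : wreath_type :=
  ([ffun x => u.1 x * v.1 (u.2^-1 * x)], u.2 * v.2).
Definition wr_one : wreath_type := ([ffun => 1], 1).
Definition wr_inv (u : wreath_type) : wreath_type :=
  ([ffun y => (u.1 (u.2 * y))^-1], u.2^-1).

Lemma wr_mulA : associative wr_mul.
Proof.
move=> [f a] [g b] [h c]; rewrite /wr_mul /=; congr (_, _); last by rewrite mulgA.
by apply/ffunP=> x; rewrite !ffunE mulgA invMg mulgA.
Qed.

Lemma wr_mul1 : left_id wr_one wr_mul.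
Proof.
move=> [f a]; rewrite /wr_mul /=; congr (_, _); last by rewrite mul1g.
by apply/ffunP=> x; rewrite !ffunE mul1g invg1 mul1g.
Qed.

Lemma wr_mulV : left_inverse wr_one wr_inv wr_mul.
Proof.
move=> [f a]; rewrite /wr_mul /= /wr_one; congr (_, _); last by rewrite mulVg.
by apply/ffunP=> x; rewrite !ffunE invgK mulVg.
Qed.

HB.instance Definition _ :=
  Finite_isGroup.Build wreath_type wr_mulA wr_mul1 wr_mulV.

(* Z = Z(H)^n (inside the base group), and
   F = { (x_c)_c in Z : prod_c x_c = 1 }  (product well defined: Z(H) abelian). *)
Definition wreath_F : {set wreath_type} :=
  [set u : wreath_type | [&& [forall c, u.1 c \in 'Z([set: hT])],
                            u.2 == 1 & \prod_(c : cT) u.1 c == 1]].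

End Wreath.

Definition monolithic (gT : finGroupType) (G : {set gT}) : bool :=
  \bigcap_(N : {group gT} | (N <| G) && (N != 1%G)) N != 1.

(* The coordinate product is a morphism from Z = Z(H)^n onto Z(H) with kernel F, and it is
   invariant under the translation action of C, so Z / F is central in W / F. Conversely,
   commutators of an element u with the "delta" elements of the base group, which are
   supported in one coordinate, lie in F only if u has trivial top component and central
   coordinates, since H is non-abelian. Hence Z(W / F) = Z / F, which is isomorphic to Z(H).
   Finally, in a p-group with cyclic centre every nontrivial normal subgroup meets the centre,
   hence contains its unique subgroup of order p. *)

From HB Require Import structures.
From mathcomp Require Import all_boot all_fingroup all_solvable.
Set Implicit Arguments. Unset Strict Implicit. Unset Printing Implicit Defensive.
Import GroupScope.

Section CommutingProducts.
Variables (gT : finGroupType) (I : eqType) (f : I -> gT).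
Hypothesis fC : forall i j, commute (f i) (f j).

Lemma big_rem_commute (s : seq I) x :
  x \in s -> \prod_(i <- s) f i = f x * \prod_(i <- rem x s) f i.
Proof.
elim: s => // y s IHs; rewrite in_cons big_cons /=.
have [-> //|_ /= sx] := eqVneq y x.
by rewrite big_cons IHs // !mulgA fC.
Qed.

Lemma perm_prod_commute (s t : seq I) :
  perm_eq s t -> \prod_(i <- s) f i = \prod_(i <- t) f i.
Proof.
elim: s t => [|x s IHs] t pst; first by move/perm_size: pst => /esym/size0nil ->.
have tx : x \in t by rewrite -(perm_mem pst) mem_head.
rewrite big_cons (big_rem_commute tx) (IHs (rem x t)) //.
by rewrite -(perm_cons x) (perm_trans pst) // perm_to_rem.
Qed.

End CommutingProducts.

Lemma reindex_prod_commute (gT : finGroupType) (I : finType) (f : I -> gT) (h : I -> I) :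
  (forall i j, commute (f i) (f j)) -> bijective h ->
  \prod_(i : I) f (h i) = \prod_(i : I) f i.
Proof.
move=> fC [g hK gK]; rewrite -(big_map h xpredT f); apply: perm_prod_commute => //.
apply: uniq_perm; rewrite ?(map_inj_uniq (can_inj hK)) ?index_enum_uniq //.
by move=> i; rewrite mem_index_enum; apply/mapP; exists (g i); rewrite ?mem_index_enum.
Qed.

Section WreathCenter.
Variables hT cT : finGroupType.
Local Notation W := (wreath_type hT cT).
Local Notation ZH := 'Z([set: hT]).
Local Notation F := (wreath_F hT cT).
Implicit Types u v w : W.

Lemma pgroup_wreath p : p.-group [set: hT] -> p.-group [set: cT] -> p.-group [set: W].
Proof.
rewrite /pgroup !cardsT card_prod card_ffun => pH pC.
by rewrite pnatM pC pnatX pH.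
Qed.

Lemma centerC z y : z \in ZH -> commute z y.
Proof. by case/centerP=> _ /(_ y (in_setT y)). Qed.

Definition wreath_Zbase : {set W} :=
  [set u : W | [forall c, u.1 c \in ZH] && (u.2 == 1)].
Local Notation ZB := wreath_Zbase.

Lemma ZbaseP u : reflect ((forall c, u.1 c \in ZH) /\ u.2 = 1) (u \in ZB).
Proof. by rewrite inE; apply: (iffP andP) => -[/forallP uZ /eqP u2]. Qed.

Lemma fst_mul_base u v c : u.2 = 1 -> (u * v).1 c = u.1 c * v.1 c.
Proof. by move=> u2; rewrite /= ffunE u2 invg1 mul1g. Qed.

Fact Zbase_group_set : group_set ZB.
Proof.
apply/group_setP; split; first by apply/ZbaseP; split=> // c; rewrite ffunE group1.
move=> u v /ZbaseP[uZ u2] /ZbaseP[vZ v2]; apply/ZbaseP.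
by split=> [c|]; rewrite ?fst_mul_base ?groupM //= u2 v2 mulg1.
Qed.
Canonical wreath_Zbase_group := Group Zbase_group_set.

Definition wr_delta (k : hT) (c0 : cT) : W := ([ffun c => if c == c0 then k else 1], 1).

Definition coord_prod u : hT := \prod_(c : cT) u.1 c.

Lemma coord_prodM : {in ZB &, {morph coord_prod : u v / u * v}}.
Proof.
move=> u v /ZbaseP[_ u2] /ZbaseP[vZ _]; rewrite /coord_prod.
rewrite (eq_bigr _ (fun c _ => fst_mul_base v c u2)).
by apply: prodgM_commute => i j _ _; apply/commute_sym/centerC.
Qed.
Canonical coord_prod_morphism := Morphism coord_prodM.

Lemma ker_coord_prod : 'ker coord_prod_morphism = F.
Proof.
apply/setP=> u; rewrite /ker; have -> : (u \in F) = (u \in ZB) && (coord_prod u == 1).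
  by rewrite !inE andbA.
apply/idP/idP=> [/morphpreP[Zu]|/andP[Zu u1]]; first by rewrite inE Zu.
by apply/morphpreP; split; last by rewrite inE; exact: u1.
Qed.

Lemma im_coord_prod : coord_prod_morphism @* ZB = ZH.
Proof.
apply/eqP; rewrite eqEsubset; apply/andP; split.
  apply/subsetP=> _ /morphimP[u _ /ZbaseP[uZ _] ->].
  by apply: group_prod => c _; apply: uZ.
apply/subsetP=> z Zz; have Zd : wr_delta z 1 \in ZB.
  by apply/ZbaseP; split=> // c; rewrite ffunE; case: ifP.
apply/morphimP; exists (wr_delta z 1) => //.
by rewrite /= /coord_prod (eq_bigr _ (fun c _ => ffunE _ c)) -big_mkcond big_pred1_eq.
Qed.

Fact wreath_F_group_set : group_set F.
Proof. by rewrite -ker_coord_prod groupP. Qed.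
Canonical wreath_F_group := Group wreath_F_group_set.

Lemma conj_Zbase u w : u \in ZB -> u ^ w = ([ffun c => u.1 (w.2 * c)], 1).
Proof.
case/ZbaseP=> uZ u2; apply: injective_projections => /=; last first.
  by rewrite u2 mul1g mulVg.
by apply/ffunP=> c; rewrite !ffunE invgK u2 invg1 mul1g (centerC _ (uZ _)) mulKg.
Qed.

Lemma Zbase_conj u w : u \in ZB -> u ^ w \in ZB.
Proof.
move=> Zu; have [uZ _] := ZbaseP _ Zu.
by apply/ZbaseP; rewrite conj_Zbase //; split=> // c; rewrite ffunE.
Qed.

Lemma coord_prodJ u w : u \in ZB -> coord_prod (u ^ w) = coord_prod u.
Proof.
move=> Zu; have [uZ _] := ZbaseP _ Zu.
rewrite /coord_prod conj_Zbase // (eq_bigr _ (fun c _ => ffunE _ c)).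
apply: (reindex_prod_commute (f := u.1)); first by move=> i j; apply: centerC.
by exists (fun c => w.2^-1 * c) => c; rewrite ?mulKg ?mulKVg.
Qed.

Lemma wreath_F_normal : F <| [set: W].
Proof.
rewrite /normal subsetT /=; apply/subsetP=> w _; rewrite inE.
apply/subsetP=> _ /imsetP[u Fu ->]; rewrite -ker_coord_prod in Fu *.
have Zu : u \in ZB := dom_ker Fu.
apply/kerP; first exact: Zbase_conj.
by rewrite /= coord_prodJ //; apply/kerP.
Qed.

Lemma commg_Zbase u v : u \in ZB -> [~ u, v] \in F.
Proof.
move=> Zu; have Zuv := Zbase_conj v Zu; rewrite -ker_coord_prod /commg.
apply/kerP; first by rewrite groupM ?groupV.
by rewrite morphM ?groupV //= morphV //= coord_prodJ // mulVg.
Qed.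

Lemma fst_commg_delta k c0 u c : [~ wr_delta k c0, u].1 c =
  ((wr_delta k c0).1 c)^-1 * (wr_delta k c0).1 (u.2 * c) ^ u.1 (u.2 * c).
Proof.
by rewrite /commg /conjg /= !ffunE !invgK invg1 !mul1g !mulgA.
Qed.

Lemma Zbase_of_commg_wreath_F u :
  ~~ abelian [set: hT] -> (forall v, [~ u, v] \in F) -> u \in ZB.
Proof.
move=> nabH uF; have dF k c0 : [~ wr_delta k c0, u] \in F.
  by rewrite -invg_comm groupV.
have dZ k c0 c : [~ wr_delta k c0, u].1 c \in ZH.
  by move: (dF k c0); rewrite inE => /and3P[/forallP].
have [h _ hZ] : exists2 h, h \in [set: hT] & h \notin ZH.
  case/subsetPn: nabH => h _ nCh; exists h => //.
  by apply: contra nCh => /centerP[_ ch]; apply/centP.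
(* If u.2 != 1, the conjugated delta vanishes at coordinate 1, leaving h^-1 there. *)
have u2 : u.2 = 1.
  apply/eqP; apply: contraR hZ => nu2; have := dZ h 1 1.
  by rewrite fst_commg_delta !ffunE mulg1 eqxx (negPf nu2) conj1g mulg1 groupV.
apply/ZbaseP; split=> // c0; apply/centerP; split=> [|k _]; first exact: in_setT.
have : coord_prod [~ wr_delta k c0, u] == 1.
  by move: (dF k c0); rewrite inE => /and3P[].
rewrite /coord_prod (eq_bigr (fun c => if c == c0 then [~ k, u.1 c0] else 1)).
  by rewrite -big_mkcond big_pred1_eq => /commgP /commute_sym.
move=> c _; rewrite fst_commg_delta u2 mul1g !ffunE.
by case: eqP => [->|_]; rewrite ?invg1 ?conj1g ?mulg1.
Qed.

Lemma wreath_F_norm y : y \in 'N(F).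
Proof. exact: subsetP (normal_norm wreath_F_normal) y (in_setT y). Qed.

Lemma coset_center_wreath u : ~~ abelian [set: hT] ->
  (coset F u \in 'Z([set: W] / F)) = (u \in ZB).
Proof.
move=> nabH; apply/idP/idP=> [/centerP[_ cu]|Zu].
  apply: Zbase_of_commg_wreath_F => // v; apply: coset_idr; first exact: wreath_F_norm.
  rewrite morphR ?wreath_F_norm //; apply/eqP/commgP/cu.
  exact: mem_quotient (in_setT v).
apply/centerP; split=> [|_ /morphimP[v _ _ ->]]; first exact: mem_quotient (in_setT u).
apply/commgP; rewrite -morphR ?wreath_F_norm //.
by apply/eqP/coset_id/commg_Zbase.
Qed.

Lemma center_wreath_quotient : ~~ abelian [set: hT] -> 'Z([set: W] / F) = ZB / F.
Proof.
move=> nabH; rewrite -(cosetpreK 'Z(_)); congr (_ @* _); apply/setP=> u.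
apply/morphpreP/idP=> [[_]|Zu]; rewrite coset_center_wreath //.
by split; [apply: wreath_F_norm|].
Qed.

Lemma center_wreath_quotient_isog :
  ~~ abelian [set: hT] -> 'Z([set: W] / F) \isog ZH.
Proof.
move=> nabH; rewrite center_wreath_quotient // -im_coord_prod -ker_coord_prod.
exact: first_isog.
Qed.

End WreathCenter.

Lemma monolithic_pgroup_cyclic_center (gT : finGroupType) (p : nat) (G : {group gT}) :
  p.-group G -> cyclic 'Z(G) -> G :!=: 1 -> monolithic G.
Proof.
move=> pG cZ ntG; have nilG := pgroup_nil pG.
have pZ : p.-group 'Z(G) := pgroupS (center_sub G) pG.
have ntZ : 'Z(G) != 1 by rewrite center_nil_eq1.
have oZ1 := Ohm1_cyclic_pgroup_prime cZ pZ ntZ.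
have ntZ1 : 'Ohm_1('Z(G)) != 1 by rewrite Ohm1_eq1.
apply: contra_neq ntZ1 => bigcap1; apply/eqP; rewrite -subG1 -bigcap1.
apply/bigcapsP=> N /andP[nsNG ntN].
have ntNZ : N :&: 'Z(G) != 1 by apply: meet_center_nil; rewrite // -val_eqE in ntN.
have [_ p_dvd _] := pgroup_pdiv (pgroupS (subsetIr N _) pZ) ntNZ.
apply: subset_trans (subsetIl N 'Z(G)).
by rewrite -(cardSg_cyclic cZ) ?Ohm_sub ?subsetIr ?oZ1.
Qed.

Theorem theorem4p2 (p : nat) (hT cT : finGroupType) :
  prime p ->
  p.-group [set: hT] -> ~~ abelian [set: hT] -> cyclic 'Z([set: hT]) ->
  p.-group [set: cT] ->
  wreath_F hT cT <| [set: wreath_type hT cT] /\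
  'Z([set: wreath_type hT cT] / wreath_F hT cT) \isog 'Z([set: hT]) /\
  monolithic ([set: wreath_type hT cT] / wreath_F hT cT).
Proof.
move=> _ pH nabH cZH pC.
have isoZ := center_wreath_quotient_isog cT nabH.
split; first exact: wreath_F_normal.
split; first exact: isoZ.
have ntZH : 'Z([set: hT]) != 1.
  rewrite center_nil_eq1 ?(pgroup_nil pH) //.
  by apply: contraNneq nabH => ->; apply: abelian1.
have ntZ : 'Z([set: wreath_type hT cT] / wreath_F hT cT) != 1 by rewrite (isog_eq1 isoZ).
apply: monolithic_pgroup_cyclic_center.
- exact: quotient_pgroup (pgroup_wreath pH pC).
- by rewrite (isog_cyclic isoZ).
- by apply: contraNneq ntZ => ->; rewrite center1.
Qed.
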